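(* Let $x\in W_n$ and $1\le i\le n-2$. Then $x\in\mathcal{D}_i(W_n)$ if and only if $tx\in\mathcal{D}_i(W_n)$; and if this is the case, then $\gamma_i(tx)=t\gamma_i(x)$.
   Context: $W_n$ is the Weyl group of type $B_n$ with Coxeter generators $t,s_1,\dots,s_{n-1}$ ($(ts_1)^4=1$, $(s_is_{i+1})^3=1$, other distinct pairs commute), $\ell$ its length function. For $1\le i\le n-2$ and $x\in W_n$, let $\mathcal{R}_i(x)=\{s\in\{s_i,s_{i+1}\}:\ell(xs)<\ell(x)\}$ and let $\mathcal{D}_i(W_n)$ be the set of $x\in W_n$ with $|\mathcal{R}_i(x)|=1$. For $x\in\mathcal{D}_i(W_n)$ the set $\{xs_i,xs_{i+1}\}\cap\mathcal{D}_i(W_n)$ is a singleton, whose element is denoted $\gamma_i(x)$ (the Kazhdan–Lusztig star operation). *)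

(* Weyl group W_n of type B_n realized as signed permutations:
   permutations of 'I_n * bool (coordinate j (0-indexed), sign) generated by
   t (sign change of coordinate 0, i.e. coordinate 1 in the paper) and
   s_k (1 <= k <= n-1) swapping coordinates k-1 and k (paper: k and k+1). *)
From mathcomp Require Import all_boot all_fingroup.
Unset Strict Implicit. Unset Printing Implicit Defensive.
Local Open Scope group_scope.

Section WeylB.
Variable n : nat.
Definition elt := {perm 'I_n * bool}.

Definition gen (k : 'I_n) : elt :=
  let pk : 'I_n := Ordinal (leq_ltn_trans (leq_pred k) (ltn_ord k)) in
  if (k : nat) == 0 then tperm (k, false) (k, true)
  else tperm (pk, false) (k, false) * tperm (pk, true) (k, true).

(* generator by natural-number index (identity if out of range) *)
Definition sgen (j : nat) : elt := oapp gen 1 (insub j : option 'I_n).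
Definition t : elt := sgen 0.

Definition W : {set elt} := <<[set gen k | k : 'I_n]>>.

Definition word_of_len (x : elt) (m : nat) : bool :=
  [exists w : m.-tuple 'I_n, \prod_(k <- w) gen k == x].

(* Coxeter length: least m such that x is a product of m generators.
   (A reduced word has pairwise distinct prefix products, so its length is
   < #|elt|; hence searching m in [0, #|elt|) finds the minimum for x in W.) *)
Definition ell (x : elt) : nat := find (word_of_len x) (iota 0 #|elt|).

Definition Rset (i : nat) (x : elt) : {set elt} :=
  [set s in [set sgen i; sgen i.+1] | ell (x * s) < ell x].

Definition D (i : nat) : {set elt} := [set x in W | #|Rset i x| == 1%N].

Definition gamma (i : nat) (x : elt) : elt :=
  odflt x [pick y in [set x * sgen i; x * sgen i.+1] :&: D i].
End WeylB.

From mathcomp Require Import all_boot all_fingroup zify.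
Local Open Scope group_scope.

(* Realize W_n as the centrosymmetric permutations of {0, ..., 2n-1}, the
   signed letter (j, s) sitting at position [key (j, s)].  The Coxeter length is
   the type-B inversion number [ninv], so whether s_k is a right descent of x is
   read off from the relative position of two letters under x^-1 ([descent]).
   Left multiplication by t only exchanges the letters at the two middle
   positions n - 1 and n, which are negatives of each other; the two letters
   compared for a descent s_k with k >= 1 never are, so tx and x have the same
   such descents.  Membership in D_i and the value of gamma_i only depend on
   these descents of x, x s_i and x s_(i+1), whence both claims. *)

Definition prev_ord {m} (k : 'I_m) : 'I_m :=
  Ordinal (leq_ltn_trans (leq_pred k) (ltn_ord k)).

Lemma prev_ord_neq {m} {k : 'I_m} : (0 < k)%N -> prev_ord k != k.
Proof. by move=> k_gt0; rewrite -val_eqE /=; lia. Qed.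

Lemma ord_incr_squeeze m (f : 'I_m -> nat) (a : nat) :
  (forall j : 'I_m, (0 < j)%N -> (f (prev_ord j) < f j)%N) ->
  (forall j : 'I_m, j = 0 :> nat -> (a <= f j)%N) ->
  (forall j : 'I_m, (f j < a + m)%N) ->
  forall j : 'I_m, f j = (a + j)%N.
Proof.
move=> incr f0 fub.
have lo d (j : 'I_m) : j = d :> nat -> (a + d <= f j)%N.
  elim: d j => [|d IH] j jd; first by rewrite addn0 f0.
  have := incr j; have := IH (prev_ord j); rewrite /= jd /=; lia.
have hi d (j : 'I_m) : (j + d < m)%N -> (f j + d < a + m)%N.
  elim: d j => [|d IH] j jd; first by rewrite addn0 fub.
  have j1 : (j.+1 < m)%N by lia.
  have := IH (Ordinal j1); have := incr (Ordinal j1).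
  rewrite (_ : prev_ord (Ordinal j1) = j); last exact: val_inj.
  rewrite /=; lia.
move=> j; have := lo _ j erefl; have := hi (m - j.+1)%N j; have := ltn_ord j; lia.
Qed.

Lemma card_setD1_eq (T : finType) (A B : {set T}) (p : T) :
  (forall z, z != p -> (z \in A) = (z \in B)) ->
  (#|A| + (p \in B) = #|B| + (p \in A))%N.
Proof.
move=> eqAB; rewrite (cardsD1 p A) (cardsD1 p B).
have -> : A :\ p = B :\ p.
  by apply/setP => z; rewrite !inE; case: eqVneq => //= /eqAB.
lia.
Qed.

Lemma card_set2_filter (T : finType) (P : pred T) (a b : T) : a != b ->
  #|[set s in [set a; b] | P s]| = (P a + P b)%N.
Proof.
move=> ab.
have -> : #|[set s in [set a; b] | P s]| = #|[seq s <- [:: a; b] | P s]|.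
  by apply: eq_card => s; rewrite !inE mem_filter !inE andbC.
rewrite (card_uniqP _) ?filter_uniq /= ?inE ?ab //.
by case: (P a); case: (P b).
Qed.

Lemma tperm_adjacent_lt (T : finType) (f : T -> nat) (c d u v : T) :
  injective f -> f d = (f c).+1 -> u != v -> (u, v) != (c, d) -> (u, v) != (d, c) ->
  (f (tperm c d u) < f (tperm c d v))%N = (f u < f v)%N.
Proof.
move=> inj_f fd; rewrite !xpair_eqE.
have ne w w' : w <> w' -> f w <> f w' by move=> + /inj_f.
case: (tpermP c d u) => [->|->|uc ud]; case: (tpermP c d v) => [->|->|vc vd];
  rewrite ?eqxx ?andbT //= => _ _ _;
  try (have := ne _ _ uc; have := ne _ _ ud); try (have := ne _ _ vc; have := ne _ _ vd);
  lia.
Qed.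

Lemma sqr_lt_fact m : (4 <= m)%N -> (m * m < m`!)%N.
Proof.
elim: m => [//|m IH]; rewrite leq_eqVlt => /predU1P[<- //|lt_4m].
by rewrite factS; have := IH lt_4m; nia.
Qed.

Lemma find_iota_eq (P : pred nat) (N m : nat) : (m < N)%N -> P m ->
  (forall j, (j < m)%N -> ~~ P j) -> find P (iota 0 N) = m.
Proof.
move=> lt_mN Pm notP; rewrite -(subnKC (ltnW lt_mN)) iotaD find_cat size_iota.
have -> : has P (iota 0 m) = false.
  by apply/hasP => -[j]; rewrite mem_iota => /andP[_ /notP/negP].
by rewrite -(subnSK lt_mN) /= add0n Pm addn0.
Qed.

(* a, b, c are the positions of the letters i-1, i, i+1; x s_i and x s_(i+1)
   see them as b, a, c and a, c, b respectively. *)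
Lemma star_ltn3 (a b c : nat) : a != b -> b != c -> a != c -> (b < a)%N != (c < b)%N ->
  ((a < b)%N != (c < a)%N) != ((c < a)%N != (b < c)%N).
Proof. by move=> /eqP ab /eqP bc /eqP ac; case: ltngtP; case: ltngtP; case: ltngtP; lia. Qed.

Section SignedPermutations.
Context {n : nat}.
Implicit Types (x : elt n) (a b c d : 'I_n * bool).

(* [(j, false)] and [(j, true)] stand for j+1 and -(j+1); [key] lists
   -n < ... < -1 < 1 < ... < n as 0, ..., 2n-1, and [flip] is negation. *)
Definition key a : nat := if a.2 then (n - a.1.+1)%N else (n + a.1)%N.
Definition flip a : 'I_n * bool := (a.1, ~~ a.2).

Lemma key_lt a : (key a < 2 * n)%N.
Proof. case: a => [[j lt_jn] []]; rewrite /key /=; lia. Qed.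

Lemma key_inj : injective key.
Proof.
move=> [[j lt_jn] []] [[j' lt_j'n] []]; rewrite /key /= => eq_key; try lia;
  by congr pair; apply: val_inj => /=; lia.
Qed.

Lemma key_flip a : key (flip a) = (2 * n - 1 - key a)%N.
Proof. case: a => [[j lt_jn] []]; rewrite /key /=; lia. Qed.

Lemma flipK : involutive flip.
Proof. by case=> j s; rewrite /flip /= negbK. Qed.

Lemma flip_neq a : flip a != a.
Proof. by case: a => j []; rewrite /flip xpair_eqE eqxx. Qed.

(* A centrosymmetric x inverts (a, b) iff it inverts (flip b, flip a);
   [root_pair] keeps exactly one pair of each such couple (they coincide when
   b = flip a), so [ninv] is the type-B inversion number. *)
Definition root_pair a b : bool := (2 * n <= key a + key b + 1)%N.

Definition inversion x (ab : ('I_n * bool) * ('I_n * bool)) : bool :=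
  [&& key ab.1 < key ab.2, root_pair ab.1 ab.2 & key (x ab.2) < key (x ab.1)]%N.

Definition ninv x : nat := #|[set ab | inversion x ab]|.

Definition sort_pair a b := if (key a < key b)%N then (a, b) else (b, a).

Lemma inversion_sort_pair x a b : a != b ->
  inversion x (sort_pair a b) =
  root_pair a b && ((key a < key b)%N != (key (x a) < key (x b))%N).
Proof.
move=> ab; have kab : key a != key b by rewrite (inj_eq key_inj).
have kxab : key (x a) != key (x b) by rewrite (inj_eq key_inj) (inj_eq perm_inj).
rewrite /inversion /sort_pair /root_pair.
case: (ltngtP (key a) (key b)) kab => //= lt_ab _;
  case: (ltngtP (key (x a)) (key (x b))) kxab => //= lt_xab _;
  by rewrite lt_ab ?andbT ?andbF // (addnC (key b)).
Qed.

Lemma inversion_mul_tperm x c d ab : key d = (key c).+1 ->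
  ab != sort_pair (x^-1 c) (x^-1 d) ->
  inversion (x * tperm c d) ab = inversion x ab.
Proof.
case: ab => a b cd ab_ne; rewrite /inversion /= !permM.
case: ltnP => //= lt_ab; congr (_ && _); apply: tperm_adjacent_lt key_inj cd _ _ _.
- by rewrite (inj_eq perm_inj); apply: contraTneq lt_ab => ->; rewrite ltnn.
- apply: contra ab_ne; rewrite xpair_eqE => /andP[/eqP <- /eqP <-].
  by rewrite !permK /sort_pair ltnNge (ltnW lt_ab).
- apply: contra ab_ne; rewrite xpair_eqE => /andP[/eqP <- /eqP <-].
  by rewrite !permK /sort_pair lt_ab.
Qed.

Lemma ninv_mul_tperm x c d : key d = (key c).+1 ->
  let P := x^-1 c in let Q := x^-1 d in
  (ninv (x * tperm c d)%g + (root_pair P Q && (key Q < key P)%N) =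
   ninv x + (root_pair P Q && (key P < key Q)%N))%N.
Proof.
move=> cd P Q.
have PQ : P != Q by rewrite (inj_eq perm_inj); apply/eqP => eq_cd; move: cd; rewrite eq_cd; lia.
have kPQ : key P != key Q by rewrite (inj_eq key_inj).
have := @card_setD1_eq _ [set ab | inversion (x * tperm c d) ab]
  [set ab | inversion x ab] (sort_pair P Q).
rewrite !inE !inversion_sort_pair // !permM !permKV tpermL tpermR cd ltnSn.
rewrite (ltnNge (key c).+1) leqnSn /= eqb_id eqbF_neg negbK.
have -> : ~~ (key P < key Q)%N = (key Q < key P)%N by case: ltngtP kPQ.
by apply=> ab ab_ne; rewrite !inE inversion_mul_tperm.
Qed.

Lemma sgen_ord (k : 'I_n) : sgen n k = gen n k.
Proof. by rewrite /sgen valK. Qed.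

Lemma gen0E (k : 'I_n) : k = 0 :> nat -> gen n k = tperm (k, true) (k, false).
Proof. by move=> /eqP k0; rewrite /gen k0 tpermC. Qed.

Lemma gen_posE (k : 'I_n) : (0 < k)%N ->
  gen n k = tperm (prev_ord k, false) (k, false) * tperm (k, true) (prev_ord k, true).
Proof. by move=> k_gt0; rewrite /gen eqn0Ngt k_gt0 /= [tperm (_, true) _]tpermC. Qed.

Lemma genE (k : 'I_n) j s : (0 < k)%N -> gen n k (j, s) = (tperm (prev_ord k) k j, s).
Proof.
move=> k_gt0; rewrite gen_posE // permM.
have kp : k != prev_ord k by rewrite eq_sym prev_ord_neq.
have [->|jp] := eqVneq j (prev_ord k); last have [->|jk] := eqVneq j k.
all: case: s; rewrite !permE /=.
all: do 2 rewrite ?xpair_eqE ?eqxx ?(negbTE kp) ?(negbTE jp) ?(negbTE jk) ?andbF ?andbT //=.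
all: by rewrite eq_sym (negbTE kp).
Qed.

Lemma genK (k : 'I_n) : involutive (gen n k).
Proof.
case: (posnP k) => [k0 a|k_gt0 [j s]]; first by rewrite gen0E // tpermK.
by rewrite !genE // tpermK.
Qed.

Lemma genV (k : 'I_n) : (gen n k)^-1 = gen n k.
Proof. by apply/permP => a; rewrite -{1}(genK k a) permK. Qed.

Lemma gen_flip (k : 'I_n) a : gen n k (flip a) = flip (gen n k a).
Proof.
case: (posnP k) => [k0|k_gt0]; last by case: a => j s; rewrite !genE.
by rewrite gen0E // (inj_tperm _ _ _ (can_inj flipK)) tpermC.
Qed.

Lemma gen_in_W (k : 'I_n) : gen n k \in W n.
Proof. by apply: mem_gen; apply: imset_f. Qed.

Lemma sgen_in_W j : sgen n j \in W n.
Proof. by rewrite /sgen; case: insub => [k|] /=; [exact: gen_in_W | exact: group1]. Qed.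

Definition centrosymmetric x := forall a, x (flip a) = flip (x a).

Lemma centrosymmetricV {x} : centrosymmetric x -> centrosymmetric x^-1.
Proof. by move=> cx a; apply: (@perm_inj _ x); rewrite cx !permKV. Qed.

Definition flip_perm : elt n := perm (can_inj flipK).

Lemma W_centrosymmetric {x} : x \in W n -> centrosymmetric x.
Proof.
have : W n \subset 'C[flip_perm].
  rewrite gen_subG; apply/subsetP => _ /imsetP[k _ ->].
  by apply/cent1P/permP => a; rewrite !permM !permE gen_flip.
move=> /subsetP sWC /sWC /cent1P /permP xf a.
by have := xf a; rewrite !permM !permE.
Qed.

(* [gen n k] exchanges [(k, false)] with [below k], the letter just below it,
   together with their negatives when k > 0. *)
Definition below (k : 'I_n) : 'I_n * bool :=
  if k == 0 :> nat then (k, true) else (prev_ord k, false).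

Lemma key_below (k : 'I_n) : key (k, false) = (key (below k)).+1.
Proof. rewrite /below /key; have := ltn_ord k; case: eqP => /= [-> | /eqP]; lia. Qed.

Definition descent x (k : 'I_n) : bool :=
  (key (x^-1 (k, false)) < key (x^-1 (below k)))%N.

Lemma ninv_mul_gen {x} (k : 'I_n) : centrosymmetric x ->
  (ninv (x * gen n k)%g + descent x k = ninv x + ~~ descent x k)%N.
Proof.
move=> cx; have cxV := centrosymmetricV cx.
have key_xV a b : a != b -> key (x^-1 a) != key (x^-1 b).
  by move=> ab; rewrite (inj_eq key_inj) (inj_eq perm_inj).
rewrite /descent /below; case: (posnP k) => [k0|k_gt0] /=.
  rewrite gen0E //.
  have := ninv_mul_tperm x _ _ (key_below k); rewrite /below k0 eqxx.
  have -> : root_pair (x^-1 (k, true)) (x^-1 (k, false)).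
    rewrite /root_pair -[(k, false)]/(flip (k, true)) cxV key_flip.
    by have := key_lt (x^-1 (k, true)); lia.
  have := key_xV (k, true) (k, false) (flip_neq (k, false)).
  by case: ltngtP.
rewrite gen_posE // mulgA.
set c := (prev_ord k, false); set d := (k, false).
have cd : c != d by rewrite xpair_eqE andbT prev_ord_neq.
have key_c2 : key (prev_ord k, true) = (key (k, true)).+1 by rewrite /key /=; have := ltn_ord k; lia.
have P2 : (x * tperm c d)^-1 (k, true) = flip (x^-1 d).
  by rewrite invMg permM tpermV tpermD ?xpair_eqE ?andbF // -cxV.
have Q2 : (x * tperm c d)^-1 (prev_ord k, true) = flip (x^-1 c).
  by rewrite invMg permM tpermV tpermD ?xpair_eqE ?andbF // -cxV.
have := ninv_mul_tperm x _ _ (key_below k); rewrite /below eqn0Ngt k_gt0 /= -/c -/d.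
have := ninv_mul_tperm (x * tperm c d) _ _ key_c2; rewrite P2 Q2.
rewrite /root_pair !key_flip.
have := key_lt (x^-1 c); have := key_lt (x^-1 d); have := key_xV c d cd.
have : key (x^-1 d) != key (flip (x^-1 c)) by rewrite -cxV key_xV // xpair_eqE andbF.
rewrite key_flip.
move: (ninv _) (ninv _) (ninv _) (key (x^-1 c)) (key (x^-1 d)); lia.
Qed.

Lemma descent_free {x} : centrosymmetric x -> (forall k, ~~ descent x k) -> x = 1.
Proof.
move=> cx no_desc; have cxV := centrosymmetricV cx.
have xV_pos j : key (x^-1 (j, false)) = (n + j)%N.
  apply: (@ord_incr_squeeze n (fun j => key (x^-1 (j, false)))) => {j} [j j_gt0|j j0|j].
  - have := no_desc j; rewrite /descent /below eqn0Ngt j_gt0 /= -leqNgt leq_eqVlt.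
    by rewrite (inj_eq key_inj) (inj_eq perm_inj) xpair_eqE andbT (negbTE (prev_ord_neq j_gt0)).
  - have := no_desc j; rewrite /descent /below j0 eqxx /= -leqNgt.
    rewrite -[(j, true)]/(flip (j, false)) cxV key_flip.
    by have := key_lt (x^-1 (j, false)); lia.
  - by have := key_lt (x^-1 (j, false)); lia.
have xV1 : x^-1 = 1.
  apply/permP => -[j s]; rewrite perm1.
  have xVj : x^-1 (j, false) = (j, false) by apply: key_inj; rewrite xV_pos.
  by case: s => //; rewrite -[(j, true)]/(flip (j, false)) cxV xVj.
by rewrite -[x]invgK xV1 invg1.
Qed.

Lemma ninv1 : ninv 1 = 0%N.
Proof.
apply/eqP; rewrite cards_eq0; apply/eqP/setP => -[a b].
by rewrite !inE /inversion /= !perm1; case: ltngtP; rewrite ?andbF.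
Qed.

Lemma prod_gen_in_W (s : seq 'I_n) : \prod_(k <- s) gen n k \in W n.
Proof. by apply: group_prod => k _; exact: gen_in_W. Qed.

Lemma prod_gen_rcons (s : seq 'I_n) k :
  \prod_(j <- rcons s k) gen n j = (\prod_(j <- s) gen n j : elt n) * gen n k.
Proof. by rewrite big_rcons. Qed.

Lemma ninv_prod_gen (s : seq 'I_n) : (ninv (\prod_(k <- s) gen n k)%g <= size s)%N.
Proof.
elim/last_ind: s => [|s k IH]; first by rewrite big_nil ninv1.
rewrite prod_gen_rcons size_rcons.
by have := ninv_mul_gen k (W_centrosymmetric (prod_gen_in_W s)); case: descent; lia.
Qed.

Lemma exists_word_ninv x : x \in W n ->
  exists2 s : seq 'I_n, size s = ninv x & \prod_(k <- s) gen n k = x.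
Proof.
move: {2}(ninv x) (erefl (ninv x)) => m; elim: m x => [|m IH] x ninv_x Wx.
  exists [::]; rewrite // big_nil; apply/esym/descent_free; first exact: W_centrosymmetric.
  by move=> k; have := ninv_mul_gen k (W_centrosymmetric Wx); case: descent; lia.
have [k desc_k|no_desc] := pickP (descent x).
  have := ninv_mul_gen k (W_centrosymmetric Wx); rewrite desc_k ninv_x => ninv_xk.
  have {}ninv_xk : ninv (x * gen n k) = m by lia.
  have [s size_s prod_s] := IH _ ninv_xk (groupM Wx (gen_in_W k)).
  exists (rcons s k); first by rewrite size_rcons size_s ninv_xk.
  by rewrite prod_gen_rcons prod_s -mulgA -{1}genV mulVg mulg1.
move: ninv_x; rewrite (descent_free (W_centrosymmetric Wx)) ?ninv1 // => k.
by rewrite no_desc.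
Qed.

Lemma word_of_lenP x m :
  reflect (exists2 s : seq 'I_n, size s = m & \prod_(k <- s) gen n k = x)
          (word_of_len n x m).
Proof.
apply: (iffP existsP) => [[w /eqP prod_w]|[s size_s prod_s]].
  by exists w; rewrite ?size_tuple.
have size_s' : size s == m by rewrite size_s.
by exists (Tuple size_s'); rewrite /= prod_s.
Qed.

Lemma ninv_lt_card x : (2 <= n)%N -> (ninv x < #|elt n|)%N.
Proof.
move=> n_ge2.
have le_ninv : (ninv x <= #|{: ('I_n * bool) * ('I_n * bool)}|)%N by apply: max_card.
have le_perm : (#|perm_on [set: 'I_n * bool]| <= #|elt n|)%N by apply: max_card.
rewrite card_perm cardsT !card_prod card_ord card_bool in le_ninv le_perm.
by have := sqr_lt_fact (n * 2) ltac:(lia); lia.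
Qed.

Lemma ellE x : (2 <= n)%N -> x \in W n -> ell n x = ninv x.
Proof.
move=> n_ge2 Wx; apply: find_iota_eq; first exact: ninv_lt_card.
  by apply/word_of_lenP; apply: exists_word_ninv.
move=> j lt_j; apply/word_of_lenP => -[s size_s prod_s].
by have := ninv_prod_gen s; rewrite prod_s size_s; lia.
Qed.

Lemma ell_mul_gen_lt x (k : 'I_n) : (2 <= n)%N -> x \in W n ->
  (ell n (x * gen n k)%g < ell n x)%N = descent x k.
Proof.
move=> n_ge2 Wx; rewrite !ellE ?groupM ?gen_in_W //.
by have := ninv_mul_gen k (W_centrosymmetric Wx); case: (descent x k); lia.
Qed.

Definition pos x (j : 'I_n) : nat := key (x^-1 (j, false)).

Lemma pos_inj x : injective (pos x).
Proof. by move=> j j' /key_inj /perm_inj []. Qed.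

Lemma descent_pos x (k : 'I_n) : (0 < k)%N -> descent x k = (pos x k < pos x (prev_ord k))%N.
Proof. by move=> k_gt0; rewrite /descent /below eqn0Ngt k_gt0. Qed.

Lemma pos_mul_gen x (k j : 'I_n) : (0 < k)%N ->
  pos (x * gen n k) j = pos x (tperm (prev_ord k) k j).
Proof. by move=> k_gt0; rewrite /pos invMg permM genV genE. Qed.

Lemma descent_tmul x (k : 'I_n) : centrosymmetric x -> (0 < k)%N ->
  descent (t n * x) k = descent x k.
Proof.
move=> cx k_gt0; have cxV := centrosymmetricV cx.
pose o : 'I_n := Ordinal (leq_ltn_trans (leq0n k) (ltn_ord k)).
have -> : t n = tperm (o, true) (o, false) by rewrite -gen0E // -sgen_ord.
rewrite !descent_pos // /pos invMg !permM tpermV.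
set u := x^-1 (k, false); set v := x^-1 (prev_ord k, false).
have v_flip : v != flip u.
  by rewrite /u -cxV (inj_eq perm_inj) xpair_eqE andbF.
apply: tperm_adjacent_lt key_inj _ _ _ _; first by rewrite /key /=; have := ltn_ord k; lia.
- by rewrite (inj_eq perm_inj) xpair_eqE andbT eq_sym prev_ord_neq.
- by apply: contra v_flip; rewrite xpair_eqE => /andP[/eqP-> /eqP->].
- by apply: contra v_flip; rewrite xpair_eqE => /andP[/eqP-> /eqP->].
Qed.

Lemma descent_star x (k k' : 'I_n) : (0 < k)%N -> k' = k.+1 :> nat ->
  descent x k != descent x k' ->
  (descent (x * gen n k) k != descent (x * gen n k) k') !=
  (descent (x * gen n k') k != descent (x * gen n k') k').
Proof.
move=> k_gt0 kk'; have k'_gt0 : (0 < k')%N by rewrite kk'.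
have prev_k' : prev_ord k' = k by apply: val_inj; rewrite /= kk'.
have hk : prev_ord k != k := prev_ord_neq k_gt0.
have kk'_neq : k != k' by rewrite -{1}prev_k' prev_ord_neq.
have hk' : prev_ord k != k' by rewrite -val_eqE /= kk'; lia.
rewrite !descent_pos // prev_k' !pos_mul_gen // prev_k' !tpermL !tpermR.
rewrite (tpermD hk' kk'_neq) (@tpermD _ k) 1?[k == _]eq_sym 1?[k' == _]eq_sym //.
by apply: star_ltn3; rewrite (inj_eq (pos_inj x)).
Qed.

Section StarOperation.
Context {i : nat} (i_gt0 : (0 < i)%N) (lt_i1n : (i.+1 < n)%N).

Let si : 'I_n := Ordinal (ltnW lt_i1n).
Let si1 : 'I_n := Ordinal lt_i1n.

Lemma gen_si_neq : gen n si != gen n si1.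
Proof.
apply/eqP => /permP /(_ (si, false)); rewrite !genE //= tpermR.
have -> : prev_ord si1 = si by exact: val_inj.
by rewrite tpermL => /(congr1 (val \o fst)) /=; lia.
Qed.

Lemma mem_D x : x \in W n -> (x \in D n i) = (descent x si != descent x si1).
Proof.
move=> Wx; have n_ge2 : (2 <= n)%N by lia.
rewrite /D /Rset inE Wx -[i]/(val si) -[i.+1]/(val si1) !sgen_ord.
rewrite card_set2_filter ?gen_si_neq // !ell_mul_gen_lt //.
by case: descent; case: descent.
Qed.

Lemma mem_D_tmul x : x \in W n -> (t n * x \in D n i) = (x \in D n i).
Proof.
move=> Wx; have cx := W_centrosymmetric Wx.
by rewrite !mem_D ?groupM ?sgen_in_W // !descent_tmul.
Qed.

Lemma D_star {x} : x \in D n i -> (x * sgen n i \in D n i) != (x * sgen n i.+1 \in D n i).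
Proof.
move=> Dx; have Wx : x \in W n by case/setIdP: Dx.
have Ws k : x * gen n k \in W n := groupM Wx (gen_in_W k).
rewrite -[i]/(val si) -[i.+1]/(val si1) !sgen_ord !mem_D //.
by apply: (descent_star x si si1 i_gt0 erefl); rewrite -mem_D.
Qed.

End StarOperation.

Lemma gammaE {i x} :
  (x * sgen n i \in D n i) != (x * sgen n i.+1 \in D n i) ->
  gamma n i x = if x * sgen n i \in D n i then x * sgen n i else x * sgen n i.+1.
Proof.
rewrite /gamma; case: pickP => [y|none] /=.
  rewrite inE in_set2 => /andP[/orP[]/eqP-> Dy]; rewrite Dy //.
  by case: (_ \in D n i).
by have := none (x * sgen n i); have := none (x * sgen n i.+1); rewrite !inE !eqxx orbT /= => -> ->.
Qed.

End SignedPermutations.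

Theorem corollary2p13 (n i : nat) (x : elt n) :
  x \in W n -> (1 <= i <= n - 2)%N ->
  (x \in D n i <-> t n * x \in D n i) /\
  (x \in D n i -> gamma n i (t n * x) = t n * gamma n i x).
Proof.
move=> Wx /andP[i_gt0 le_in2]; have lt_i1n : (i.+1 < n)%N by lia.
have Dt := mem_D_tmul i_gt0 lt_i1n.
split; first by rewrite Dt.
move=> Dx; have star := D_star i_gt0 lt_i1n Dx.
have Wxs j : x * sgen n j \in W n by rewrite groupM ?sgen_in_W.
rewrite (gammaE star) gammaE -!mulgA ?Dt //.
by case: (_ \in D n i).
Qed.
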